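(* Let $G$ be a graph with no induced $P_7$, $C_4$, $C_6$ or $C_7$, let $H=(B_1,\dots,B_5)$ be a nice blowup of $C_5$ in $G$, and let $i\in\{1,\dots,5\}$. If $a-b-c$ is an induced path on three vertices with $a,b,c\in A_3(i)$, then $N_H(a)\subseteq N_H(b)$ and $N_H(c)\subseteq N_H(b)$.
   Context: Indices modulo $5$. A nice blowup of $C_5$ is a tuple $(B_1,\dots,B_5)$ of pairwise disjoint cliques such that every vertex of $B_j$ has a neighbor in $B_{j-1}$ and in $B_{j+1}$, $B_j$ is anticomplete to $B_{j+2}$, and there are no $a\in B_j$, distinct $b,c\in B_{j+1}$, $d\in B_{j+2}$ with $G[\{a,b,c,d\}]\cong P_4$; $V(H)=\bigcup B_j$. For $v\notin V(H)$, $\operatorname{supp}(v)$ is the set of $j$ such that $v$ has a neighbor in $B_j$; $A_3(i)=\{v\notin V(H):\operatorname{supp}(v)=\{i-1,i,i+1\}\}$; $N_H(v)$ is the set of neighbors of $v$ in $V(H)$. *)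

(* Simple graph: symmetric irreflexive relation e on a finType T.
   Indices mod 5 are 'I_5 = {0,...,4}, successor ordS, predecessor ord_pred. *)
From mathcomp Require Import all_boot.
Set Implicit Arguments. Unset Strict Implicit. Unset Printing Implicit Defensive.

Section Graphs.
Variables (T : finType) (e : rel T).

Definition induced_path (k : nat) (f : 'I_k -> T) : Prop :=
  injective f /\
  forall i j : 'I_k, e (f i) (f j) = ((i.+1 == j :> nat) || (j.+1 == i :> nat)).

Definition induced_cycle (k : nat) (f : 'I_k -> T) : Prop :=
  injective f /\
  forall i j : 'I_k, e (f i) (f j) = ((ordS i == j) || (ordS j == i)).

Definition has_induced_P (k : nat) : Prop := exists f : 'I_k -> T, induced_path f.
Definition has_induced_C (k : nat) : Prop := exists f : 'I_k -> T, induced_cycle f.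

Definition clique (A : {set T}) : Prop := {in A &, forall x y, x != y -> e x y}.
Definition anticomplete (A B : {set T}) : Prop := {in A & B, forall x y, ~~ e x y}.

Definition induces_P4 (S : {set T}) : Prop :=
  exists f : 'I_4 -> T, induced_path f /\ f @: setT = S.

Definition nxt (j : 'I_5) : 'I_5 := ordS j.
Definition prv (j : 'I_5) : 'I_5 := ord_pred j.

Definition nice_blowup (B : 'I_5 -> {set T}) : Prop :=
  [/\ (forall j k : 'I_5, j != k -> [disjoint B j & B k]),
      (forall j, clique (B j)),
      (forall j, {in B j, forall v,
          (exists2 u, u \in B (prv j) & e v u) /\ (exists2 u, u \in B (nxt j) & e v u)}),
      (forall j, anticomplete (B j) (B (nxt (nxt j))))
    & (forall j a b c d, a \in B j -> b \in B (nxt j) -> c \in B (nxt j) -> b != c ->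
          d \in B (nxt (nxt j)) -> ~ induces_P4 [set a; b; c; d])].

Definition VH (B : 'I_5 -> {set T}) : {set T} := \bigcup_(j : 'I_5) B j.
Definition supp (B : 'I_5 -> {set T}) (v : T) : {set 'I_5} :=
  [set j | [exists u in B j, e v u]].
Definition A3 (B : 'I_5 -> {set T}) (i : 'I_5) : {set T} :=
  [set v | (v \notin VH B) && (supp B v == [set prv i; i; nxt i])].
Definition NH (B : 'I_5 -> {set T}) (v : T) : {set T} := [set u in VH B | e v u].

End Graphs.

From mathcomp Require Import all_boot.
Set Implicit Arguments. Unset Strict Implicit. Unset Printing Implicit Defensive.

(* Around B_i put
   C0 = B_i, C1 = B_(i+1), C2 = B_(i+2), C3 = B_(i-2), C4 = B_(i-1): vertices
   of A3(i) see C4, C0, C1 but not C2, C3, and the reflection C1 <-> C4,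
   C2 <-> C3 preserves this picture.  Let x in C1 be a neighbour of a that b
   misses; then c misses x too (else a-b-c-x is an induced C4).  Take t in C4
   adjacent to c.  If a ~ t, neighbours of b and of c in C1 close an induced
   C4.  Otherwise take z in C2 adjacent to x and w in C3 adjacent to t: then
   b-t-w-z-x-a is an induced C6 or c-b-a-x-z-w-t an induced C7, or, when
   z is not adjacent to w, c-b-a-x-z-w'-w is an induced P7 for a neighbour w'
   of z in C3.  By reflection the same holds in C4, and a neighbour of a in C0
   missed by b then gives an induced C4 through common neighbours of a and b
   in C1 and C4. *)

(* On indices of type 'I_k, [cycle_rel k] is convertible to the adjacency in
   [induced_cycle]. *)
Definition cycle_rel k : rel nat := fun i j => (i.+1 %% k == j) || (j.+1 %% k == i).
Definition path_rel : rel nat := fun i j => (i.+1 == j) || (j.+1 == i).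

(* Distinct vertices of the graph [R] on 0..k-1 have distinct neighbourhoods;
   stated over [iota] so that it is decided by evaluation. *)
Definition twin_free k (R : rel nat) :=
  all (fun i => all (fun j => (i == j) || has (fun l => R l i != R l j) (iota 0 k))
                    (iota 0 k))
      (iota 0 k).

Lemma twin_free_C6 : twin_free 6 (cycle_rel 6). Proof. by []. Qed.
Lemma twin_free_C7 : twin_free 7 (cycle_rel 7). Proof. by []. Qed.
Lemma twin_free_P7 : twin_free 7 path_rel. Proof. by []. Qed.

Lemma notin_neq (T : eqType) (A : {pred T}) u v : u \notin A -> v \in A -> u != v.
Proof. by move=> /memPnC; apply. Qed.

Lemma disjoint_neq (T : finType) (A B : {pred T}) u v :
  [disjoint A & B] -> u \in A -> v \in B -> u != v.
Proof. by move=> AB uA; apply: notin_neq; rewrite (disjointFr AB uA). Qed.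

Lemma nxtK : cancel nxt prv. Proof. exact: ordSK. Qed.
Lemma prvK : cancel prv nxt. Proof. exact: ord_predK. Qed.

Lemma nxt3 (j : 'I_5) : nxt (nxt (nxt j)) = prv (prv j).
Proof. by apply/val_inj; case: j => [[|[|[|[|[|//]]]]] ?]. Qed.

Lemma prv3 (j : 'I_5) : prv (prv (prv j)) = nxt (nxt j).
Proof. by apply/val_inj; case: j => [[|[|[|[|[|//]]]]] ?]. Qed.

Section InducedSubgraphs.
Variables (T : finType) (e : rel T).
Hypotheses (e_sym : symmetric e) (e_irr : irreflexive e).

Lemma edge_neq u v : e u v -> u != v.
Proof. by apply: contraTneq => ->; rewrite e_irr. Qed.

Lemma nbr_nonnbr_neq w u v : e w u -> ~~ e w v -> u != v.
Proof. by move=> wu; apply: contraNneq => <-. Qed.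

Lemma realization_inj k (R : rel nat) (f : 'I_k -> T) :
  twin_free k R -> (forall i j : 'I_k, e (f i) (f j) = R i j) -> injective f.
Proof.
move=> tf fR i j fij; apply/val_inj/eqP.
have iota_ord (m : 'I_k) : val m \in iota 0 k by rewrite mem_iota ltn_ord.
have /allP/(_ j (iota_ord j))/orP [//|/hasP [l]] := allP tf i (iota_ord i).
by rewrite mem_iota => /= lk; rewrite -(fR (Ordinal lk) i) -(fR (Ordinal lk) j) fij eqxx.
Qed.

Local Ltac adjacency_by_hyps :=
  rewrite /= ?e_irr //;
  first [ assumption | apply/negbTE; assumption
        | rewrite e_sym; assumption | rewrite e_sym; apply/negbTE; assumption ].

Lemma induced_C4 v0 v1 v2 v3 :
  e v0 v1 -> e v1 v2 -> e v2 v3 -> e v3 v0 -> ~~ e v0 v2 -> ~~ e v1 v3 ->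
  v0 != v2 -> v1 != v3 -> has_induced_C e 4.
Proof.
move=> e01 e12 e23 e30 ne02 ne13 v02 v13; pose f := tnth [tuple v0; v1; v2; v3].
exists f; split.
  apply/tuple_uniqP; rewrite /= !inE !negb_or v02 v13 (edge_neq e01) (edge_neq e12).
  by rewrite (edge_neq e23) eq_sym (edge_neq e30).
by do 2 case=> [[|[|[|[|//]]]] ?]; adjacency_by_hyps.
Qed.

Lemma induced_C6 v0 v1 v2 v3 v4 v5 :
  e v0 v1 -> e v1 v2 -> e v2 v3 -> e v3 v4 -> e v4 v5 -> e v5 v0 ->
  ~~ e v0 v2 -> ~~ e v0 v3 -> ~~ e v0 v4 -> ~~ e v1 v3 -> ~~ e v1 v4 -> ~~ e v1 v5 ->
  ~~ e v2 v4 -> ~~ e v2 v5 -> ~~ e v3 v5 -> has_induced_C e 6.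
Proof.
move=> *; pose f := tnth [tuple v0; v1; v2; v3; v4; v5].
have fR (i j : 'I_6) : e (f i) (f j) = cycle_rel 6 i j.
  by move: i j; do 2 case=> [[|[|[|[|[|[|//]]]]]] ?]; adjacency_by_hyps.
by exists f; split; [apply: realization_inj twin_free_C6 fR | exact: fR].
Qed.

Lemma induced_C7 v0 v1 v2 v3 v4 v5 v6 :
  e v0 v1 -> e v1 v2 -> e v2 v3 -> e v3 v4 -> e v4 v5 -> e v5 v6 -> e v6 v0 ->
  ~~ e v0 v2 -> ~~ e v0 v3 -> ~~ e v0 v4 -> ~~ e v0 v5 -> ~~ e v1 v3 -> ~~ e v1 v4 ->
  ~~ e v1 v5 -> ~~ e v1 v6 -> ~~ e v2 v4 -> ~~ e v2 v5 -> ~~ e v2 v6 -> ~~ e v3 v5 ->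
  ~~ e v3 v6 -> ~~ e v4 v6 -> has_induced_C e 7.
Proof.
move=> *; pose f := tnth [tuple v0; v1; v2; v3; v4; v5; v6].
have fR (i j : 'I_7) : e (f i) (f j) = cycle_rel 7 i j.
  by move: i j; do 2 case=> [[|[|[|[|[|[|[|//]]]]]]] ?]; adjacency_by_hyps.
by exists f; split; [apply: realization_inj twin_free_C7 fR | exact: fR].
Qed.

Lemma induced_P7 v0 v1 v2 v3 v4 v5 v6 :
  e v0 v1 -> e v1 v2 -> e v2 v3 -> e v3 v4 -> e v4 v5 -> e v5 v6 ->
  ~~ e v0 v2 -> ~~ e v0 v3 -> ~~ e v0 v4 -> ~~ e v0 v5 -> ~~ e v0 v6 -> ~~ e v1 v3 ->
  ~~ e v1 v4 -> ~~ e v1 v5 -> ~~ e v1 v6 -> ~~ e v2 v4 -> ~~ e v2 v5 -> ~~ e v2 v6 ->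
  ~~ e v3 v5 -> ~~ e v3 v6 -> ~~ e v4 v6 -> has_induced_P e 7.
Proof.
move=> *; pose f := tnth [tuple v0; v1; v2; v3; v4; v5; v6].
have fR (i j : 'I_7) : e (f i) (f j) = path_rel i j.
  by move: i j; do 2 case=> [[|[|[|[|[|[|[|//]]]]]]] ?]; adjacency_by_hyps.
by exists f; split; [apply: realization_inj twin_free_P7 fR | exact: fR].
Qed.

End InducedSubgraphs.

Section AroundC5Blowup.
Variables (T : finType) (e : rel T).
Hypotheses (e_sym : symmetric e) (e_irr : irreflexive e).

Record c5_frame (C0 C1 C2 C3 C4 : {set T}) : Prop := C5Frame {
  clique0 : clique e C0; clique1 : clique e C1; clique2 : clique e C2;
  clique3 : clique e C3; clique4 : clique e C4;
  anti02 : anticomplete e C0 C2; anti13 : anticomplete e C1 C3;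
  anti24 : anticomplete e C2 C4; anti30 : anticomplete e C3 C0;
  anti41 : anticomplete e C4 C1;
  disj01 : [disjoint C0 & C1]; disj02 : [disjoint C0 & C2]; disj03 : [disjoint C0 & C3];
  disj04 : [disjoint C0 & C4]; disj12 : [disjoint C1 & C2]; disj13 : [disjoint C1 & C3];
  disj14 : [disjoint C1 & C4]; disj23 : [disjoint C2 & C3]; disj24 : [disjoint C2 & C4];
  disj34 : [disjoint C3 & C4];
  nbr01 : {in C0, forall v, exists2 u, u \in C1 & e v u};
  nbr04 : {in C0, forall v, exists2 u, u \in C4 & e v u};
  nbr10 : {in C1, forall v, exists2 u, u \in C0 & e v u};
  nbr12 : {in C1, forall v, exists2 u, u \in C2 & e v u};
  nbr21 : {in C2, forall v, exists2 u, u \in C1 & e v u};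
  nbr23 : {in C2, forall v, exists2 u, u \in C3 & e v u};
  nbr32 : {in C3, forall v, exists2 u, u \in C2 & e v u};
  nbr34 : {in C3, forall v, exists2 u, u \in C4 & e v u};
  nbr43 : {in C4, forall v, exists2 u, u \in C3 & e v u};
  nbr40 : {in C4, forall v, exists2 u, u \in C0 & e v u} }.

Record a3_vertex (C0 C1 C2 C3 C4 : {set T}) (v : T) : Prop := A3Vertex {
  notin0 : v \notin C0; notin1 : v \notin C1; notin2 : v \notin C2;
  notin3 : v \notin C3; notin4 : v \notin C4;
  a3_nbr4 : exists2 u, u \in C4 & e v u;
  a3_nbr0 : exists2 u, u \in C0 & e v u;
  a3_nbr1 : exists2 u, u \in C1 & e v u;
  a3_nonnbr2 : {in C2, forall u, ~~ e v u};
  a3_nonnbr3 : {in C3, forall u, ~~ e v u} }.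

Lemma anticomplete_sym (A B : {set T}) : anticomplete e A B -> anticomplete e B A.
Proof. by move=> AB u v uB vA; rewrite e_sym AB. Qed.

Lemma c5_frame_mirror C0 C1 C2 C3 C4 :
  c5_frame C0 C1 C2 C3 C4 -> c5_frame C0 C4 C3 C2 C1.
Proof.
by case=> *; constructor=> //; rewrite 1?disjoint_sym //; apply: anticomplete_sym.
Qed.

Lemma a3_vertex_mirror C0 C1 C2 C3 C4 v :
  a3_vertex C0 C1 C2 C3 C4 v -> a3_vertex C0 C4 C3 C2 C1 v.
Proof. by case. Qed.

Lemma c5_frame_of_blowup (B : 'I_5 -> {set T}) (i : 'I_5) : nice_blowup e B ->
  c5_frame (B i) (B (nxt i)) (B (nxt (nxt i))) (B (prv (prv i))) (B (prv i)).
Proof.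
case=> disj cliq nbr anti _.
have nbr_prv j : {in B j, forall v, exists2 u, u \in B (prv j) & e v u}.
  by move=> v /nbr [].
have nbr_nxt j : {in B j, forall v, exists2 u, u \in B (nxt j) & e v u}.
  by move=> v /nbr [].
constructor; try exact: cliq; try by apply: disj; case: i => [[|[|[|[|[|//]]]]] ?].
- exact: anti.
- by have := anti (nxt i); rewrite nxt3.
- by have := anti (nxt (nxt i)); rewrite nxt3 nxtK.
- by have := anti (prv (prv i)); rewrite !prvK.
- by have := anti (prv i); rewrite prvK.
- exact: nbr_nxt.
- exact: nbr_prv.
- by have := nbr_prv (nxt i); rewrite nxtK.
- exact: nbr_nxt.
- by have := nbr_prv (nxt (nxt i)); rewrite nxtK.
- by have := nbr_nxt (nxt (nxt i)); rewrite nxt3.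
- by have := nbr_prv (prv (prv i)); rewrite prv3.
- by have := nbr_nxt (prv (prv i)); rewrite prvK.
- exact: nbr_prv.
- by have := nbr_nxt (prv i); rewrite prvK.
Qed.

Lemma a3_vertex_of (B : 'I_5 -> {set T}) (i : 'I_5) v : v \in A3 e B i ->
  a3_vertex (B i) (B (nxt i)) (B (nxt (nxt i))) (B (prv (prv i))) (B (prv i)) v.
Proof.
rewrite inE => /andP [vH /eqP supp_v].
have notin j : v \notin B j by apply: contra vH => vj; apply/bigcupP; exists j.
have nbrP j : reflect (exists2 u, u \in B j & e v u) (j \in [set prv i; i; nxt i]).
  rewrite -supp_v inE; apply: (iffP existsP) => [[u /andP [] ]|[u uj vu]]; first by exists u.
  by exists u; rewrite uj.
have nonnbr j : j \notin [set prv i; i; nxt i] -> {in B j, forall u, ~~ e v u}.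
  by move=> /nbrP nvj u uj; apply: contra_notN nvj => vu; exists u.
constructor; try exact: notin; try by apply/nbrP; rewrite !inE eqxx ?orbT.
all: apply: nonnbr; by case: i {supp_v nbrP} => [[|[|[|[|[|//]]]]] ?]; rewrite !inE.
Qed.


Hypotheses (noP7 : ~ has_induced_P e 7) (noC4 : ~ has_induced_C e 4)
           (noC6 : ~ has_induced_C e 6) (noC7 : ~ has_induced_C e 7).

(* [frame_fact] closes a goal [e u v], [~~ e u v] or [u != v] from the
   hypotheses in the context, so proofs unpack the frame and vertex records. *)
Local Ltac by_hyp := match goal with H : _ |- _ => solve [apply: H; assumption] end.

Local Ltac frame_neq :=
  first [ assumption | rewrite eq_sym; assumption
        | match goal with H : _ |- _ =>
            solve [ apply: (disjoint_neq H); assumption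
                  | rewrite eq_sym; apply: (disjoint_neq H); assumption
                  | apply: (notin_neq H); assumption
                  | rewrite eq_sym; apply: (notin_neq H); assumption ] end ].

Local Ltac frame_fact :=
  match goal with
  | |- is_true (_ != _) => frame_neq
  | |- is_true (~~ e _ _) => first [ by_hyp | rewrite e_sym; by_hyp ]
  | |- is_true (e _ _) =>
      first [ by_hyp | rewrite e_sym; by_hyp
            | match goal with H : clique e _ |- _ =>
                solve [apply: H; [assumption | assumption | frame_neq]] end ]
  end.

Local Ltac no_C4 v0 v1 v2 v3 :=
  exfalso; apply: noC4; apply: (@induced_C4 T e e_sym e_irr v0 v1 v2 v3); frame_fact.
Local Ltac no_C6 v0 v1 v2 v3 v4 v5 :=
  exfalso; apply: noC6; apply: (@induced_C6 T e e_sym e_irr v0 v1 v2 v3 v4 v5); frame_fact.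
Local Ltac no_C7 v0 v1 v2 v3 v4 v5 v6 :=
  exfalso; apply: noC7; apply: (@induced_C7 T e e_sym e_irr v0 v1 v2 v3 v4 v5 v6); frame_fact.
Local Ltac no_P7 v0 v1 v2 v3 v4 v5 v6 :=
  exfalso; apply: noP7; apply: (@induced_P7 T e e_sym e_irr v0 v1 v2 v3 v4 v5 v6); frame_fact.

Section InducedA3Path.
Variables a b c : T.
Hypotheses (ab : e a b) (bc : e b c) (nac : ~~ e a c) (ac : a != c).

Lemma a3_path_next_nbr C0 C1 C2 C3 C4 :
  c5_frame C0 C1 C2 C3 C4 -> a3_vertex C0 C1 C2 C3 C4 a ->
  a3_vertex C0 C1 C2 C3 C4 b -> a3_vertex C0 C1 C2 C3 C4 c ->
  {in C1, forall x, e a x -> e b x}.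
Proof.
move=> hC ha hb hc x xC1 ax; apply: contraT => nbx.
case: (hC) => *; case: (ha) => *; case: (hb) => *; case: (hc) => *.
have ncx : ~~ e c x by apply/negP => cx; no_C4 a b c x.
have [t tC4 ct] := a3_nbr4 hc.
have nat : ~~ e a t.
  apply/negP => at_.
  have bt : e b t by apply: contraT => nbt; no_C4 a b c t.
  have [y yC1 by_] := a3_nbr1 hb.
  have yx : y != x := nbr_nonnbr_neq by_ nbx.
  have ay : e a y by apply: contraT => nay; no_C4 a x y b.
  have ncy : ~~ e c y by apply/negP => cy; no_C4 c y a t.
  have [y' y'C1 cy'] := a3_nbr1 hc.
  have y'x : y' != x := nbr_nonnbr_neq cy' ncx.
  have y'y : y' != y := nbr_nonnbr_neq cy' ncy.
  have nay' : ~~ e a y' by apply/negP => ay'; no_C4 a y' c t.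
  by have [by'|nby'] := boolP (e b y'); [no_C4 a b y' x | no_C4 b c y' y].
have [z zC2 xz] := nbr12 hC xC1.
have [w wC3 tw] := nbr43 hC tC4.
have [zw|nzw] := boolP (e z w).
  by have [bt|nbt] := boolP (e b t); [no_C6 b t w z x a | no_C7 c b a x z w t].
have [w' w'C3 zw'] := nbr23 hC zC2.
have w'w : w' != w := nbr_nonnbr_neq zw' nzw.
no_P7 c b a x z w' w.
Qed.

Lemma a3_path_prev_nbr C0 C1 C2 C3 C4 :
  c5_frame C0 C1 C2 C3 C4 -> a3_vertex C0 C1 C2 C3 C4 a ->
  a3_vertex C0 C1 C2 C3 C4 b -> a3_vertex C0 C1 C2 C3 C4 c ->
  {in C4, forall x, e a x -> e b x}.
Proof.
move=> /c5_frame_mirror hC /a3_vertex_mirror ha /a3_vertex_mirror hb /a3_vertex_mirror hc.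
exact: a3_path_next_nbr hC ha hb hc.
Qed.

Lemma a3_path_cur_nbr C0 C1 C2 C3 C4 :
  c5_frame C0 C1 C2 C3 C4 -> a3_vertex C0 C1 C2 C3 C4 a ->
  a3_vertex C0 C1 C2 C3 C4 b -> a3_vertex C0 C1 C2 C3 C4 c ->
  {in C0, forall x, e a x -> e b x}.
Proof.
move=> hC ha hb hc x xC0 ax; apply: contraT => nbx.
have next_nbr := a3_path_next_nbr hC ha hb hc.
have prev_nbr := a3_path_prev_nbr hC ha hb hc.
case: (hC) => *; case: (ha) => *; case: (hb) => *.
have [u uC4 au] := a3_nbr4 ha.
have [v vC1 av] := a3_nbr1 ha.
have [q qC4 [xq bq]] : exists2 q, q \in C4 & e x q /\ e b q.
  have [xu|nxu] := boolP (e x u); first by exists u => //; split; last exact: prev_nbr u uC4 au.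
  have [q qC4 xq] := nbr04 hC xC0.
  have qu : q != u := nbr_nonnbr_neq xq nxu.
  have aq : e a q by apply: contraT => naq; no_C4 a x q u.
  by exists q => //; split; last exact: prev_nbr q qC4 aq.
have nxv : ~~ e x v by apply/negP => xv; no_C4 x v b q.
have [p pC1 xp] := nbr01 hC xC0.
have pv : p != v := nbr_nonnbr_neq xp nxv.
have ap : e a p by apply: contraT => nap; no_C4 a x p v.
have bp := next_nbr p pC1 ap.
no_C4 b p x q.
Qed.

Lemma a3_path_NH_subset (B : 'I_5 -> {set T}) (i : 'I_5) :
  nice_blowup e B -> a \in A3 e B i -> b \in A3 e B i -> c \in A3 e B i ->
  NH e B a \subset NH e B b.
Proof.
move=> hB Ha Hb Hc.
have hC := c5_frame_of_blowup i hB.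
have ha := a3_vertex_of Ha; have hb := a3_vertex_of Hb; have hc := a3_vertex_of Hc.
have prev_nbr := a3_path_prev_nbr hC ha hb hc.
have cur_nbr := a3_path_cur_nbr hC ha hb hc.
have next_nbr := a3_path_next_nbr hC ha hb hc.
apply/subsetP => u; rewrite !inE => /andP [uH au]; rewrite uH /=.
have /bigcupP [j _ uj] := uH.
have : j \in supp e B a by rewrite inE; apply/existsP; exists u; rewrite uj.
move: Ha; rewrite inE => /andP [_ /eqP ->]; rewrite !inE -orbA.
case/or3P => /eqP Ej; rewrite Ej in uj.
- exact: prev_nbr _ uj au.
- exact: cur_nbr _ uj au.
- exact: next_nbr _ uj au.
Qed.

End InducedA3Path.

End AroundC5Blowup.

Theorem lemma8p4 (T : finType) (e : rel T) (e_sym : symmetric e) (e_irr : irreflexive e)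
  (noP7 : ~ has_induced_P e 7) (noC4 : ~ has_induced_C e 4)
  (noC6 : ~ has_induced_C e 6) (noC7 : ~ has_induced_C e 7)
  (B : 'I_5 -> {set T}) (hB : nice_blowup e B) (i : 'I_5) (a b c : T) :
  a \in A3 e B i -> b \in A3 e B i -> c \in A3 e B i ->
  e a b -> e b c -> ~~ e a c -> a != c ->
  NH e B a \subset NH e B b /\ NH e B c \subset NH e B b.
Proof.
move=> Ha Hb Hc ab bc nac ac.
have NH_sub := a3_path_NH_subset e_sym e_irr noP7 noC4 noC6 noC7.
split; first exact: NH_sub ab bc nac ac B i hB Ha Hb Hc.
by apply: NH_sub Hc Hb Ha; rewrite 1?e_sym 1?eq_sym.
Qed.
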